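(* In any execution of the Weakener algorithm (described in the context), for every round $j \ge 0$: if no process reaches the step ''write $\textsc{true}$ into $R_2[j]$'' in round $j$, then neither $p_0$ nor $p_1$ enters round $j+1$.
   Context: Weakener algorithm for $n \ge 3$ processes $p_0,\dots,p_{n-1}$ in an asynchronous shared-memory system. Shared registers, for each $j = 0,1,2,\dots$: $R_1[j]$, a multi-writer multi-reader register initialized to $\bot$; $C_1[j]$, a register written only by $p_0$, initialized to $-1$; $R_2[j]$, a register initialized to $\textsc{false}$. Code of $p_i$ for $i \in \{0,1\}$: for rounds $j=0,1,2,\dots$: (Phase 1) write $i$ into $R_1[j]$; if $i=0$, flip a fair coin (outcome in $\{0,1\}$) and write the outcome into $C_1[j]$; (Phase 2) read $R_2[j]$ into local variable $v_1$; if $v_1 = \textsc{false}$, exit the for loop. After the loop: return. Code of $p_i$ for $i \in \{2,\dots,n-1\}$: for rounds $j=0,1,2,\dots$: (Phase 1) read $R_1[j]$ into $u_1$; read $R_1[j]$ into $u_2$; read $C_1[j]$ into $c_1$; if $u_1 \ne c_1$ or $u_2 \ne 1-c_1$, exit the for loop; (Phase 2) write $\textsc{true}$ into $R_2[j]$. After the loop: return. Registers behave according to their (linearizable) sequential specification: a read returns the initial value or a value written to that register. *)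

From Stdlib Require Import ZArith List Arith.
Open Scope Z_scope.

(* Program points (local state) of a process.  The round number is the
   first argument.  Local computations (coin flip, comparisons, loop
   exits) are folded into the adjacent shared-memory step. *)
Inductive loc : Type :=
  (* processes p_0, p_1 *)
  | W1  (j : nat)
  | WC  (j : nat)
  | RD2 (j : nat)
  (* processes p_2 .. p_{n-1} *)
  | RA  (j : nat)
  | RB  (j : nat) (u1 : option Z)
  | RC  (j : nat) (u1 u2 : option Z)
  | W2  (j : nat)
  | Done.

(* R1[j] : None = bottom, Some v = value v; C1[j] : Z (initially -1);
   R2[j] : bool (initially false). *)
Record config : Type := mkConfig {
  R1 : nat -> option Z;
  C1 : nat -> Z;
  R2 : nat -> bool;
  pc : nat -> loc
}.

Definition upd {A : Type} (f : nat -> A) (k : nat) (v : A) : nat -> A :=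
  fun x => if Nat.eqb x k then v else f x.

Definition init_config : config :=
  mkConfig (fun _ => None) (fun _ => (-1)%Z) (fun _ => false)
           (fun i => if Nat.leb i 1 then W1 0 else RA 0).

Inductive step (n : nat) (c : config) : config -> Prop :=
  | st_W1 i j : (i < n)%nat -> pc c i = W1 j ->
      step n c (mkConfig (upd (R1 c) j (Some (Z.of_nat i))) (C1 c) (R2 c)
                 (upd (pc c) i (if Nat.eqb i 0 then WC j else RD2 j)))
  | st_WC i j (b : Z) : (i < n)%nat -> pc c i = WC j -> (b = 0 \/ b = 1) ->
      step n c (mkConfig (R1 c) (upd (C1 c) j b) (R2 c) (upd (pc c) i (RD2 j)))
  | st_RD2 i j : (i < n)%nat -> pc c i = RD2 j ->
      step n c (mkConfig (R1 c) (C1 c) (R2 c)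
                 (upd (pc c) i (if R2 c j then W1 (S j) else Done)))
  | st_RA i j : (i < n)%nat -> pc c i = RA j ->
      step n c (mkConfig (R1 c) (C1 c) (R2 c) (upd (pc c) i (RB j (R1 c j))))
  | st_RB i j u1 : (i < n)%nat -> pc c i = RB j u1 ->
      step n c (mkConfig (R1 c) (C1 c) (R2 c) (upd (pc c) i (RC j u1 (R1 c j))))
  | st_RC_exit i j u1 u2 : (i < n)%nat -> pc c i = RC j u1 u2 ->
      (u1 <> Some (C1 c j) \/ u2 <> Some (1 - C1 c j)) ->
      step n c (mkConfig (R1 c) (C1 c) (R2 c) (upd (pc c) i Done))
  | st_RC_cont i j u1 u2 : (i < n)%nat -> pc c i = RC j u1 u2 ->
      u1 = Some (C1 c j) -> u2 = Some (1 - C1 c j) ->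
      step n c (mkConfig (R1 c) (C1 c) (R2 c) (upd (pc c) i (W2 j)))
  | st_W2 i j : (i < n)%nat -> pc c i = W2 j ->
      step n c (mkConfig (R1 c) (C1 c) (upd (R2 c) j true) (upd (pc c) i (RA (S j)))).

(* A (finite prefix of an) execution, as the list of configurations visited,
   most recent first.  Any interleaving (asynchrony) and any coin outcomes
   are allowed. *)
Inductive execution (n : nat) : list config -> Prop :=
  | ex_init : execution n (init_config :: nil)
  | ex_step c c' tr : execution n (c :: tr) -> step n c c' ->
      execution n (c' :: c :: tr).

Definition in_round (j : nat) (l : loc) : Prop :=
  match l with
  | W1 k | WC k | RD2 k | RA k | RB k _ | RC k _ _ | W2 k => k = j
  | Done => False
  end.

(* While nobody has written TRUE into R2[j], the register R2[j] stays FALSE,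
   so a process p_0 or p_1 reading it in round j exits the loop instead of
   entering round j+1.  Formally, "R2[j] = FALSE and p_0, p_1 are at a step
   of round at most j or have returned" is invariant under every step not
   taken from the write of TRUE into R2[j]. *)
From Stdlib Require Import ZArith List Arith Lia.

Lemma execution_guarded_invariant n (P Q : config -> Prop) tr :
  execution n tr ->
  P init_config ->
  (forall c c', Q c -> P c -> step n c c' -> P c') ->
  (forall c, In c tr -> Q c) ->
  forall c, In c tr -> P c.
Proof.
  intros Hex Hinit Hstep.
  induction Hex as [|c c' tr Hex IH Hs]; intros HQ c0 Hin.
  - destruct Hin as [<- | []]. exact Hinit.
  - assert (IHc : forall c1, In c1 (c :: tr) -> P c1)
      by (apply IH; intros c1 Hc1; apply HQ; right; exact Hc1).
    destruct Hin as [<- | Hin]; [| exact (IHc c0 Hin)].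
    apply (Hstep c); [apply HQ; right; left | apply IHc; left | exact Hs];
      reflexivity.
Qed.

Lemma upd_preserves_on {A : Type} (D : nat -> Prop) (B : A -> Prop)
  (f : nat -> A) k v :
  (forall i, D i -> B (f i)) -> (D k -> B v) ->
  forall i, D i -> B (upd f k v i).
Proof.
  intros Hf Hv i Hi. unfold upd.
  destruct (Nat.eqb_spec i k) as [-> |]; auto.
Qed.

Definition writer_pc_le (j : nat) (l : loc) : Prop :=
  match l with
  | W1 k | WC k | RD2 k => (k <= j)%nat
  | Done => True
  | _ => False
  end.

Definition round_closed (j : nat) (c : config) : Prop :=
  R2 c j = false /\ forall i, (i <= 1)%nat -> writer_pc_le j (pc c i).

Definition no_W2 (n j : nat) (c : config) : Prop :=
  forall i, (i < n)%nat -> pc c i <> W2 j.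

Lemma writer_pc_le_not_in_round j l : writer_pc_le j l -> ~ in_round (S j) l.
Proof. destruct l; simpl; lia. Qed.

Lemma round_closed_init j : round_closed j init_config.
Proof.
  split; [reflexivity |].
  intros i Hi. simpl. destruct (Nat.leb_spec i 1); simpl; lia.
Qed.

Lemma round_closed_step n j c c' :
  no_W2 n j c -> round_closed j c -> step n c c' -> round_closed j c'.
Proof.
  intros Hno [HR Hpc] Hs.
  destruct Hs as [i k Hi Hat | i k b Hi Hat _ | i k Hi Hat | i k Hi Hat
                 | i k u1 Hi Hat | i k u1 u2 Hi Hat _ | i k u1 u2 Hi Hat _ _
                 | i k Hi Hat];
    split; simpl; try exact HR;
    (* p_0 and p_1 are never at a reader's program point, which disposes of
       the reader steps. *)
    try (apply (upd_preserves_on (fun i => i <= 1)%nat); [exact Hpc |];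
         intros Hi1; specialize (Hpc i Hi1); rewrite Hat in Hpc; simpl in Hpc;
         try contradiction).
  - destruct (Nat.eqb i 0); simpl; exact Hpc.
  - exact Hpc.
  - destruct (Nat.eq_dec k j) as [-> |].
    + rewrite HR. exact I.
    + destruct (R2 c k); simpl; [lia | exact I].
  - unfold upd. destruct (Nat.eqb_spec j k) as [-> |]; [| exact HR].
    exfalso. exact (Hno i Hi Hat).
Qed.

Theorem lemma1 (n : nat) (Hn : (3 <= n)%nat) (tr : list config)
  (Hex : execution n tr) (j : nat) :
  (* no process reaches the step "write TRUE into R2[j]" in round j *)
  (forall c i, In c tr -> (i < n)%nat -> pc c i <> W2 j) ->
  (* then neither p_0 nor p_1 ever enters round j+1 *)
  forall c, In c tr -> ~ in_round (S j) (pc c 0) /\ ~ in_round (S j) (pc c 1).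
Proof.
  intros Hno c Hin.
  destruct (execution_guarded_invariant n (round_closed j) (no_W2 n j) tr Hex
              (round_closed_init j) (round_closed_step n j)
              (fun c Hc i Hi => Hno c i Hc Hi) c Hin) as [_ Hpc].
  split; apply writer_pc_le_not_in_round, Hpc; lia.
Qed.
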